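(* Not every small set is small$^\star$; that is, $\mathcal S^\star\subsetneq\mathcal S$: there exists a small set $X\subseteq 2^\omega$ which is not small$^\star$.
   Context: A set $X\subseteq 2^\omega$ is small ($X\in\mathcal S$) if there is a sequence $\{(I_n,J_n):n\in\omega\}$ such that each $I_n$ is a finite subset of $\omega$, $I_n\cap I_m=\emptyset$ for $n\neq m$, $J_n\subseteq 2^{I_n}$ (functions from $I_n$ to $\{0,1\}$), $\sum_{n\in\omega}\frac{|J_n|}{2^{|I_n|}}<\infty$, and $X\subseteq\{x\in 2^\omega: \text{for infinitely many } n,\ x\restriction I_n\in J_n\}$. A set $X$ is small$^\star$ ($X\in\mathcal S^\star$) if it is small witnessed by such a sequence in which additionally the $I_n$ are consecutive intervals, i.e. there is a strictly increasing sequence of integers $\{k_n:n\in\omega\}$ with $I_n=[k_n,k_{n+1})$ for every $n$. *)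

From Stdlib Require Import Reals List Lia.
Import ListNotations.
Open Scope R_scope.

Definition cantor := nat -> bool.

(* x restricted to the finite set I (given as a duplicate-free list),
   encoded as the list of values of x along the list I.  A function
   I -> 2 is thus a list of booleans of length |I|. *)
Definition restr (x : cantor) (I : list nat) : list bool := map x I.

(* A witnessing sequence {(I_n, J_n)} : I_n finite subsets of omega, pairwise
   disjoint; J_n a set of functions I_n -> 2 (encoded as duplicate-free
   lists of boolean lists of length |I_n|); sum |J_n| / 2^|I_n| < oo. *)
Record small_seq (I : nat -> list nat) (J : nat -> list (list bool)) : Prop := {
  ss_nodupI : forall n, NoDup (I n);
  ss_disj : forall n m i, n <> m -> In i (I n) -> ~ In i (I m);
  ss_nodupJ : forall n, NoDup (J n);
  ss_Jfun : forall n s, In s (J n) -> length s = length (I n);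
  ss_sum : exists B : R, forall N,
      sum_f_R0 (fun n => INR (length (J n)) / 2 ^ length (I n)) N <= B
}.

Definition io_in (I : nat -> list nat) (J : nat -> list (list bool)) (x : cantor) : Prop :=
  forall N, exists n, (N <= n)%nat /\ In (restr x (I n)) (J n).

Definition small (X : cantor -> Prop) : Prop :=
  exists I J, small_seq I J /\ forall x, X x -> io_in I J x.

Definition small_star (X : cantor -> Prop) : Prop :=
  exists (k : nat -> nat) I J,
    (forall n, (k n < k (S n))%nat) /\
    (forall n, I n = seq (k n) (k (S n) - k n)) /\
    small_seq I J /\ forall x, X x -> io_in I J x.

From Stdlib Require Import Reals List Lia Lra FunctionalExtensionality Classical ClassicalEpsilon.
Import ListNotations.
Open Scope R_scope.

(* Let X be the set of x that, for infinitely many n, copy their values on A_n = [n², n² + n)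
   onto a later block B_n of the same length.  X is small, with weights 2^n / 2^(2n).  Given
   intervals [k_m, k_(m+1)) and sets J_m with summable weights, build x by a fusion argument.  At
   each stage pick n so large that a boundary k_u lies between A_n and B_n; then copying A_n onto
   B_n leaves the coordinates of every interval independent and uniformly distributed, and since
   the remaining weights sum to less than 1, a union bound gives a copying pattern avoiding J_m on
   all intervals of the stage.  The limit x lies in X but is covered by no J_m beyond the first
   stage, so X is not small*. *)

Definition upd (z : cantor) (i : nat) (b : bool) : cantor :=
  fun p => if Nat.eqb p i then b else z p.

Lemma upd_comm z p q b c : p <> q -> upd (upd z p b) q c = upd (upd z q c) p b.
Proof.
  intro Hpq. apply functional_extensionality; intro i. unfold upd.
  destruct (Nat.eqb_spec i q), (Nat.eqb_spec i p); subst; tauto.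
Qed.

Section Counting.
Local Open Scope nat_scope.

(* The number of 0-1 patterns on [0, K), extended by [false] beyond [K], that satisfy [P]. *)
Fixpoint count_patterns (K : nat) (P : cantor -> Prop) : nat :=
  match K with
  | O => if excluded_middle_informative (P (fun _ => false)) then 1 else 0
  | S K => count_patterns K (fun z => P (upd z K true))
           + count_patterns K (fun z => P (upd z K false))
  end.

Lemma count_patterns_ext K P P' :
  (forall z, P z <-> P' z) -> count_patterns K P = count_patterns K P'.
Proof.
  revert P P'; induction K as [|K IH]; intros P P' HP; simpl.
  - destruct (excluded_middle_informative (P _)) as [H|H],
      (excluded_middle_informative (P' _)) as [H'|H']; auto;
      [apply HP in H | apply HP in H']; contradiction.
  - f_equal; apply IH; intro; apply HP.
Qed.

Lemma count_patterns_le_pow K P : count_patterns K P <= 2 ^ K.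
Proof.
  revert P; induction K as [|K IH]; intro P; simpl.
  - destruct (excluded_middle_informative _); lia.
  - pose proof (IH (fun z => P (upd z K true))); pose proof (IH (fun z => P (upd z K false))); lia.
Qed.

Lemma count_patterns_True K : count_patterns K (fun _ => True) = 2 ^ K.
Proof.
  induction K as [|K IH]; simpl.
  - destruct (excluded_middle_informative True); tauto.
  - rewrite IH; lia.
Qed.

Lemma count_patterns_False K : count_patterns K (fun _ => False) = 0.
Proof.
  induction K as [|K IH]; simpl.
  - destruct (excluded_middle_informative False); tauto.
  - rewrite IH; lia.
Qed.

Lemma count_patterns_or K P P' :
  count_patterns K (fun z => P z \/ P' z) <= count_patterns K P + count_patterns K P'.
Proof.
  revert P P'; induction K as [|K IH]; intros P P'; simpl.
  - destruct (excluded_middle_informative (P _)), (excluded_middle_informative (P' _)),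
      (excluded_middle_informative (_ \/ _)); tauto || lia.
  - pose proof (IH (fun z => P (upd z K true)) (fun z => P' (upd z K true))).
    pose proof (IH (fun z => P (upd z K false)) (fun z => P' (upd z K false))).
    lia.
Qed.

Lemma exists_not_of_count_patterns_lt K P :
  count_patterns K P < 2 ^ K -> exists z, ~ P z.
Proof.
  intro Hlt. apply NNPP; intro Hall.
  rewrite (count_patterns_ext K P (fun _ => True)), count_patterns_True in Hlt; [lia|].
  intro z; split; [tauto|]. intros _. apply NNPP; eauto.
Qed.

Lemma count_patterns_fix_bit K p c P :
  p < K -> (forall z b, P (upd z p b) <-> P z) ->
  2 * count_patterns K (fun z => z p = c /\ P z) = count_patterns K P.
Proof.
  revert p P; induction K as [|K IH]; intros p P Hp HP; [lia|]. simpl.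
  destruct (Nat.eq_dec p K) as [->|Hne].
  - rewrite (count_patterns_ext K (fun z => P (upd z K true)) P) by (intro; apply HP).
    rewrite (count_patterns_ext K (fun z => P (upd z K false)) P) by (intro; apply HP).
    assert (Hb : forall b, count_patterns K (fun z => upd z K b K = c /\ P (upd z K b))
                           = if Bool.eqb b c then count_patterns K P else 0).
    { intro b. unfold upd at 1. rewrite Nat.eqb_refl.
      destruct (Bool.eqb_spec b c).
      - apply count_patterns_ext; intro z. rewrite HP. tauto.
      - rewrite <- (count_patterns_False K). apply count_patterns_ext; tauto. }
    rewrite !Hb. destruct c; simpl; lia.
  - assert (Hb : forall b, count_patterns K (fun z => upd z K b p = c /\ P (upd z K b))
                           = count_patterns K (fun z => z p = c /\ P (upd z K b))).
    { intro b; apply count_patterns_ext; intro z. unfold upd at 1.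
      destruct (Nat.eqb_spec p K); [lia | tauto]. }
    rewrite !Hb.
    rewrite <- (IH p (fun z => P (upd z K true))), <- (IH p (fun z => P (upd z K false)));
      try lia; intros z b; rewrite upd_comm by lia; apply HP.
Qed.

Lemma count_patterns_map_eq K l s :
  NoDup l -> (forall p, In p l -> p < K) ->
  count_patterns K (fun z => map z l = s) <= 2 ^ (K - length l).
Proof.
  revert K s; induction l as [|p l IH]; intros K s Hnd Hl.
  - rewrite Nat.sub_0_r. apply count_patterns_le_pow.
  - inversion_clear Hnd as [|? ? Hp Hnd'].
    destruct s as [|c s].
    + rewrite (count_patterns_ext K _ (fun _ => False)), count_patterns_False by
        (intro; simpl; split; [discriminate | tauto]).
      lia.
    + assert (Hlen : length (p :: l) <= K).
      { rewrite <- (length_seq K 0). apply NoDup_incl_length; [now constructor|].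
        intros q Hq. apply in_seq. specialize (Hl q Hq). lia. }
      rewrite (count_patterns_ext K _ (fun z => z p = c /\ map z l = s)) by
        (intro; simpl; split; [injection 1; auto | intros [-> ->]; auto]).
      pose proof (count_patterns_fix_bit K p c (fun z => map z l = s)) as Hfix.
      pose proof (IH K s Hnd' (fun q Hq => Hl q (or_intror Hq))) as Hrest.
      rewrite <- Hfix in Hrest.
      * simpl length in *. replace (K - length l) with (S (K - S (length l))) in Hrest by lia.
        simpl in Hrest. lia.
      * apply Hl; left; reflexivity.
      * intros z b. rewrite (map_ext_in (upd z p b) z); [tauto|].
        intros q Hq. unfold upd. destruct (Nat.eqb_spec q p); congruence.
Qed.

Lemma count_patterns_map_in K l S :
  NoDup l -> (forall p, In p l -> p < K) ->
  count_patterns K (fun z => In (map z l) S) <= length S * 2 ^ (K - length l).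
Proof.
  intros Hnd Hl. induction S as [|s S IH]; simpl.
  - rewrite count_patterns_False. lia.
  - rewrite (count_patterns_ext K _ (fun z => map z l = s \/ In (map z l) S))
      by (intro; split; intros []; auto).
    pose proof (count_patterns_or K (fun z => map z l = s) (fun z => In (map z l) S)).
    pose proof (count_patterns_map_eq K l s Hnd Hl). lia.
Qed.

Lemma count_patterns_exists_le K (ms : list nat) (P : nat -> cantor -> Prop) :
  count_patterns K (fun z => exists m, In m ms /\ P m z)
  <= list_sum (map (fun m => count_patterns K (P m)) ms).
Proof.
  induction ms as [|m ms IH]; simpl.
  - rewrite (count_patterns_ext K _ (fun _ => False)), count_patterns_False
      by (intro; split; [intros (? & [] & _) | tauto]).
    lia.
  - rewrite (count_patterns_ext K _ (fun z => P m z \/ exists m', In m' ms /\ P m' z))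
      by (intro; split; [intros (m' & [<- | Hm'] & H); eauto | intros [H | (m' & Hm' & H)]; eauto]).
    pose proof (count_patterns_or K (P m) (fun z => exists m', In m' ms /\ P m' z)). lia.
Qed.

(* Union bound: the hypothesis says that the expected number of [m] with [map z (Q m) ∈ J m] is below 1. *)
Lemma exists_pattern_avoiding K (ms : list nat) (Q : nat -> list nat) (J : nat -> list (list bool)) :
  (forall m, In m ms -> NoDup (Q m)) ->
  (forall m p, In m ms -> In p (Q m) -> p < K) ->
  list_sum (map (fun m => length (J m) * 2 ^ (K - length (Q m))) ms) < 2 ^ K ->
  exists z, forall m, In m ms -> ~ In (map z (Q m)) (J m).
Proof.
  intros Hnd HQ Hsum.
  assert (Hcount : count_patterns K (fun z => exists m, In m ms /\ In (map z (Q m)) (J m)) < 2 ^ K).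
  { eapply Nat.le_lt_trans; [apply count_patterns_exists_le|].
    eapply Nat.le_lt_trans; [|exact Hsum].
    clear Hsum. induction ms as [|m ms IH]; simpl; [lia|].
    pose proof (count_patterns_map_in K (Q m) (J m) (Hnd m (or_introl eq_refl))
                  (fun p => HQ m p (or_introl eq_refl))) as Hm.
    specialize (IH (fun m' Hm' => Hnd m' (or_intror Hm')) (fun m' p Hm' => HQ m' p (or_intror Hm'))).
    lia. }
  destruct (exists_not_of_count_patterns_lt K _ Hcount) as [z Hz].
  exists z. intros m Hm Hin. apply Hz. eauto.
Qed.

End Counting.

Definition Rlist_sum (l : list R) : R := fold_right Rplus 0 l.

Lemma Rlist_sum_app l l' : Rlist_sum (l ++ l') = Rlist_sum l + Rlist_sum l'.
Proof. unfold Rlist_sum. induction l as [|x l IH]; simpl; [lra | rewrite IH; lra]. Qed.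

Lemma INR_list_sum_map (g : nat -> nat) (a : nat -> R) c ms :
  (forall m, In m ms -> INR (g m) = c * a m) ->
  INR (list_sum (map g ms)) = c * Rlist_sum (map a ms).
Proof.
  induction ms as [|m ms IH]; intro Hg; simpl; [lra|].
  rewrite plus_INR, (Hg m (or_introl eq_refl)), IH by (intros; apply Hg; simpl; auto).
  unfold Rlist_sum. simpl. lra.
Qed.

Lemma series_tail_lt_one (a : nat -> R) :
  (forall n, 0 <= a n) -> (exists B, forall N, sum_f_R0 a N <= B) ->
  exists M, forall t L, (M <= t)%nat -> Rlist_sum (map a (seq t L)) < 1.
Proof.
  intros Ha [B HB].
  set (U n := Rlist_sum (map a (seq 0 n))).
  assert (HU : forall n, U (S n) = U n + a n).
  { intro n. unfold U. rewrite seq_S, map_app, Rlist_sum_app. simpl. lra. }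
  assert (Hpartial : forall N, U (S N) = sum_f_R0 a N).
  { induction N as [|N IH]; [rewrite HU; unfold U; simpl; lra|].
    rewrite HU, IH. reflexivity. }
  assert (Hgrow : Un_growing U) by (intro n; rewrite HU; specialize (Ha n); lra).
  assert (Hub : has_ub U).
  { exists B. intros x [[|n] ->].
    - specialize (HB 0%nat). specialize (Ha 0%nat). unfold U; simpl in *; lra.
    - rewrite Hpartial. apply HB. }
  destruct (CV_Cauchy U (growing_cv U Hgrow Hub) 1 Rlt_0_1) as [M HM].
  exists M. intros t L Ht.
  assert (Hsplit : U (t + L)%nat = U t + Rlist_sum (map a (seq t L))).
  { unfold U. rewrite seq_app, map_app, Rlist_sum_app. reflexivity. }
  specialize (HM (t + L)%nat t ltac:(lia) ltac:(lia)). unfold R_dist in HM.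
  rewrite Hsplit in HM. replace (U t + _ - U t) with (Rlist_sum (map a (seq t L))) in HM by ring.
  eapply Rle_lt_trans; [apply Rle_abs | exact HM].
Qed.

Lemma sum_pow2_over_pow4 N : sum_f_R0 (fun n => INR (2 ^ n) / 2 ^ (n + n)) N <= 2.
Proof.
  assert (Hclosed : sum_f_R0 (fun n => INR (2 ^ n) / 2 ^ (n + n)) N = 2 - (/ 2) ^ N).
  { induction N as [|N IH]; [simpl; lra|].
    rewrite tech5, IH, pow_INR, pow_add, !pow_inv. replace (INR 2) with 2 by (simpl; lra).
    simpl. field. apply pow_nonzero; lra. }
  rewrite Hclosed. pose proof (pow_lt (/ 2) N ltac:(lra)). lra.
Qed.

Section CopySet.
Local Open Scope nat_scope.

(* [Icopy n] is [A_n ∪ B_n] with [A_n = [n², n² + n)] and [B_n = [n² + 3n + 4, (n + 2)²)]; the gap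
   between them contains [[n² + n, (n + 1)² + (n + 1))], so every integer lies in such a gap. *)
Definition orig_block (n : nat) : list nat := seq (n * n) n.
Definition copy_block (n : nat) : list nat := seq (n * n + 3 * n + 4) n.
Definition Icopy (n : nat) : list nat := orig_block n ++ copy_block n.

Fixpoint words (n : nat) : list (list bool) :=
  match n with
  | O => [[]]
  | S n => map (cons true) (words n) ++ map (cons false) (words n)
  end.

Definition Jcopy (n : nat) : list (list bool) := map (fun w => w ++ w) (words n).

Lemma length_words n : length (words n) = 2 ^ n.
Proof. induction n as [|n IH]; simpl; auto. rewrite length_app, !length_map, IH. lia. Qed.

Lemma in_words n w : In w (words n) <-> length w = n.
Proof.
  revert w; induction n as [|n IH]; intro w; simpl.
  - split; [intros [<- | []]; reflexivity | destruct w; simpl; [auto | discriminate]].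
  - rewrite in_app_iff, !in_map_iff. split.
    + intros [[w' [<- H]] | [w' [<- H]]]; simpl; f_equal; apply IH; auto.
    + destruct w as [|b w]; simpl; [discriminate|]. intro H. injection H as H.
      destruct b; [left | right]; exists w; split; auto; apply IH; auto.
Qed.

Lemma NoDup_words n : NoDup (words n).
Proof.
  induction n as [|n IH]; simpl.
  - repeat constructor. simpl; tauto.
  - apply NoDup_app; try (apply NoDup_map_NoDup_ForallPairs; auto; intros ? ? _ _ H; injection H; auto).
    intros w Hw Hw'. apply in_map_iff in Hw as [? [<- _]]. apply in_map_iff in Hw' as [? [H _]].
    discriminate.
Qed.

Lemma in_Icopy n p :
  In p (Icopy n) <-> n * n <= p < n * n + n \/ n * n + 3 * n + 4 <= p < n * n + 4 * n + 4.
Proof. unfold Icopy, orig_block, copy_block. rewrite in_app_iff, !in_seq. lia. Qed.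

Lemma Icopy_disjoint_lt n m p : n < m -> In p (Icopy n) -> ~ In p (Icopy m).
Proof.
  intros Hnm Hn Hm. rewrite in_Icopy in Hn, Hm.
  destruct (Nat.eq_dec m (S n)) as [->|Hne]; [nia|].
  assert ((n + 2) * (n + 2) <= m * m) by (apply Nat.mul_le_mono; lia). nia.
Qed.

Lemma small_seq_copy : small_seq Icopy Jcopy.
Proof.
  constructor.
  - intro n. apply NoDup_app; try apply seq_NoDup.
    intros p Hp Hp'. unfold orig_block, copy_block in *. rewrite in_seq in *. lia.
  - intros n m p Hnm. destruct (Nat.lt_total n m) as [Hlt | [-> | Hlt]]; [|tauto|].
    + now apply Icopy_disjoint_lt.
    + intros Hn Hm. exact (Icopy_disjoint_lt m n p Hlt Hm Hn).
  - intro n. apply NoDup_map_NoDup_ForallPairs; [|apply NoDup_words].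
    intros w w' Hw Hw' Heq. apply in_words in Hw, Hw'.
    apply (f_equal (firstn n)) in Heq. rewrite !firstn_app, <- Hw, firstn_all in Heq.
    rewrite Hw, <- Hw', Nat.sub_diag, firstn_O, !app_nil_r, firstn_all in Heq. exact Heq.
  - intros n s Hs. apply in_map_iff in Hs as [w [<- Hw]]. apply in_words in Hw.
    unfold Icopy, orig_block, copy_block. rewrite !length_app, !length_seq, Hw. reflexivity.
  - exists 2%R. intro N. eapply Rle_trans; [|apply (sum_pow2_over_pow4 N)]. right.
    apply sum_eq. intros n _. unfold Jcopy, Icopy, orig_block, copy_block.
    rewrite length_map, length_words, length_app, !length_seq. reflexivity.
Qed.

Lemma restr_Icopy_in_Jcopy x n :
  map x (orig_block n) = map x (copy_block n) -> In (restr x (Icopy n)) (Jcopy n).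
Proof.
  intro Hcopy. unfold restr, Icopy. rewrite map_app, <- Hcopy. apply (in_map (fun w => w ++ w)).
  apply in_words. unfold orig_block. rewrite length_map, length_seq. reflexivity.
Qed.

End CopySet.

Section Increasing.
Local Open Scope nat_scope.
Variable f : nat -> nat.
Hypothesis f_incr : forall n, f n < f (S n).

Lemma incr_le_mono i j : i <= j -> f i <= f j.
Proof. induction 1 as [|j _ IH]; [lia | specialize (f_incr j); lia]. Qed.

Lemma incr_ge_id n : n <= f n.
Proof. induction n as [|n IH]; [lia | specialize (f_incr n); lia]. Qed.

Lemma exists_incr_interval m : f 0 <= m -> exists j, f j <= m < f (S j).
Proof.
  induction m as [|m IH]; intro Hm.
  - exists 0. specialize (f_incr 0). lia.
  - destruct (Nat.eq_dec (f 0) (S m)) as [E|E]; [exists 0; specialize (f_incr 0); lia|].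
    destruct (IH ltac:(lia)) as [j Hj].
    destruct (Nat.eq_dec (S m) (f (S j))) as [E'|E'].
    + exists (S j). specialize (f_incr (S j)). lia.
    + exists j. lia.
Qed.

End Increasing.

Lemma limit_of_stabilizing (F : nat -> cantor) (c : nat -> nat) :
  (forall j, (c j <= c (S j))%nat) -> (forall j, (j <= c j)%nat) ->
  (forall j p, (p < c j)%nat -> F (S j) p = F j p) ->
  exists x : cantor, forall j p, (p < c j)%nat -> x p = F j p.
Proof.
  intros Hmono Hge Hstab.
  assert (Hfar : forall d j p, (p < c j)%nat -> F (j + d)%nat p = F j p).
  { induction d as [|d IH]; intros j p Hp; [now rewrite Nat.add_0_r|].
    assert (Hc : (c j <= c (j + d))%nat).
    { clear IH. induction d as [|d IHd]; [rewrite Nat.add_0_r; lia|].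
      specialize (Hmono (j + d)%nat). rewrite Nat.add_succ_r. lia. }
    rewrite Nat.add_succ_r, Hstab by lia. now apply IH. }
  exists (fun p => F (S p) p). intros j p Hp.
  destruct (Nat.le_gt_cases (S p) j) as [Hle | Hgt].
  - replace j with (S p + (j - S p))%nat by lia. symmetry. apply Hfar.
    pose proof (Hge (S p)). lia.
  - replace (S p) with (j + (S p - j))%nat by lia. now apply Hfar.
Qed.

Lemma fusion (b : nat -> nat) (Good : nat -> nat -> cantor -> Prop) (M : nat) :
  (forall n, (b n < b (S n))%nat) ->
  (forall t t' y y', (forall p, (p < b t')%nat -> y p = y' p) -> Good t t' y -> Good t t' y') ->
  (forall t prev, (M <= t)%nat -> exists t' y,
     (t < t')%nat /\ (forall p, (p < b t)%nat -> y p = prev p) /\ Good t t' y) ->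
  exists (T : nat -> nat) (x : cantor), (forall j, (T j < T (S j))%nat) /\
     (forall j, Good (T j) (T (S j)) x).
Proof.
  intros Hb Hlocal Hstep.
  destruct (choice (fun (s s' : nat * cantor) => (M <= fst s)%nat ->
      (fst s < fst s')%nat /\ (forall p, (p < b (fst s))%nat -> snd s' p = snd s p) /\
      Good (fst s) (fst s') (snd s'))) as [G HG].
  { intros [t prev]. destruct (Nat.le_gt_cases M t) as [Ht | Ht].
    - destruct (Hstep t prev Ht) as (t' & y & H). now exists (t', y).
    - exists (t, prev). simpl. lia. }
  set (T j := fst (Nat.iter j G (M, fun _ => false))).
  set (F j := snd (Nat.iter j G (M, fun _ => false))).
  assert (HM : forall j, (M <= T j)%nat).
  { induction j as [|j IH]; unfold T in *; simpl; [lia|]. pose proof (HG _ IH). lia. }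
  assert (HT : forall j, (T j < T (S j))%nat) by (intro j; apply (HG _ (HM j))).
  destruct (limit_of_stabilizing F (fun j => b (T j))) as [x Hx].
  - intro j. apply (incr_le_mono b Hb). apply Nat.lt_le_incl, HT.
  - intro j. eapply Nat.le_trans; [apply (incr_ge_id T HT) | apply (incr_ge_id b Hb)].
  - intro j. apply (HG _ (HM j)).
  - exists T, x. split; [exact HT|]. intro j.
    apply (Hlocal _ _ (F (S j))); [intros p Hp; symmetry; now apply Hx | apply (HG _ (HM j))].
Qed.

Lemma map_shift_seq a b n : map (fun p => p - b + a)%nat (seq b n) = seq a n.
Proof.
  revert a b; induction n as [|n IH]; intros a b; simpl; [reflexivity|]. f_equal; [lia|].
  rewrite <- (IH (S a) (S b)). apply map_ext_in. intros p Hp. apply in_seq in Hp. lia.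
Qed.

Section CopyBack.
Local Open Scope nat_scope.
Variables a b n : nat.

Definition copy_back (p : nat) : nat :=
  if ((b <=? p) && (p <? b + n))%bool then p - b + a else p.

Lemma copy_back_le p : a <= b -> copy_back p <= p.
Proof. intro Hab. unfold copy_back. destruct (Nat.leb_spec b p), (Nat.ltb_spec p (b + n)); simpl; lia. Qed.

Lemma copy_back_id p : p < b -> copy_back p = p.
Proof. intro Hp. unfold copy_back. destruct (Nat.leb_spec b p); [lia | reflexivity]. Qed.

Lemma map_copy_back_seq : map copy_back (seq b n) = seq a n.
Proof.
  rewrite <- (map_shift_seq a b n). apply map_ext_in. intros p Hp. apply in_seq in Hp.
  unfold copy_back. destruct (Nat.leb_spec b p), (Nat.ltb_spec p (b + n)); simpl; lia.
Qed.

Lemma NoDup_map_copy_back l :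
  NoDup l -> (forall p, In p l -> p < b) \/ (forall p, In p l -> a + n <= p) ->
  NoDup (map copy_back l).
Proof.
  intros Hnd [Hl | Hl].
  - rewrite (map_ext_in copy_back (fun p => p)), map_id; [exact Hnd|].
    intros p Hp. apply copy_back_id, Hl, Hp.
  - apply NoDup_map_NoDup_ForallPairs; [|exact Hnd].
    intros p q Hp Hq. apply Hl in Hp, Hq. unfold copy_back.
    destruct (Nat.leb_spec b p), (Nat.ltb_spec p (b + n)), (Nat.leb_spec b q),
      (Nat.ltb_spec q (b + n)); simpl; lia.
Qed.

End CopyBack.

Lemma restr_Icopy_in_Jcopy_of_copy_back n (y z : cantor) :
  (forall p, (n * n <= p)%nat -> y p = z (copy_back (n * n) (n * n + 3 * n + 4) n p)) ->
  In (restr y (Icopy n)) (Jcopy n).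
Proof.
  intro Hy. apply restr_Icopy_in_Jcopy. unfold orig_block, copy_block.
  set (sg := copy_back (n * n) (n * n + 3 * n + 4) n).
  rewrite !(map_ext_in y (fun p => z (sg p))) by (intros p Hp; apply in_seq in Hp; apply Hy; lia).
  rewrite <- !(map_map sg z), (map_copy_back_seq _ _ _ : map sg _ = _).
  rewrite (map_ext_in sg (fun p => p)), map_id; [reflexivity|].
  intros p Hp. apply in_seq in Hp. apply copy_back_id. lia.
Qed.

Lemma exists_square_gap K : exists n, (n * n + n <= K < (n + 1) * (n + 1) + (n + 1))%nat.
Proof.
  induction K as [|K [n Hn]]; [exists 0%nat; lia|].
  destruct (Nat.eq_dec (S K) ((n + 1) * (n + 1) + (n + 1))) as [E|E].
  - exists (n + 1)%nat. nia.
  - exists n. lia.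
Qed.

Definition block (k : nat -> nat) (m : nat) : list nat := seq (k m) (k (S m) - k m).

Section Stages.
Local Open Scope nat_scope.
Variables (k : nat -> nat) (J : nat -> list (list bool)).
Hypothesis k_incr : forall n, k n < k (S n).

Definition good_stage (t t' : nat) (y : cantor) : Prop :=
  (exists n, t <= n /\ n * n + 4 * n + 4 <= k t' /\ In (restr y (Icopy n)) (Jcopy n)) /\
  (forall m, t <= m < t' -> ~ In (restr y (block k m)) (J m)).

Lemma good_stage_local t t' y y' :
  (forall p, p < k t' -> y p = y' p) -> good_stage t t' y -> good_stage t t' y'.
Proof.
  intros Hyy' [(n & Hn & Hnk & Hcopy) Hblocks]. split.
  - exists n. split; [|split]; [assumption..|].
    unfold restr in *. rewrite <- (map_ext_in y y'); [exact Hcopy|].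
    intros p Hp. apply in_Icopy in Hp. apply Hyy'. lia.
  - intros m Hm. unfold restr. rewrite <- (map_ext_in y y'); [now apply Hblocks|].
    intros p Hp. apply in_seq in Hp. apply Hyy'.
    pose proof (incr_le_mono k k_incr (S m) t' ltac:(lia)). lia.
Qed.

Lemma good_stages_io_in (T : nat -> nat) (x : cantor) :
  (forall j, T j < T (S j)) -> (forall j, good_stage (T j) (T (S j)) x) ->
  io_in Icopy Jcopy x.
Proof.
  intros HT Hgood N. destruct (Hgood N) as [(n & Hn & _ & Hin) _].
  exists n. split; [pose proof (incr_ge_id T HT N); lia | exact Hin].
Qed.

Lemma good_stages_avoid (T : nat -> nat) (x : cantor) :
  (forall j, T j < T (S j)) -> (forall j, good_stage (T j) (T (S j)) x) ->
  forall m, T 0 <= m -> ~ In (restr x (block k m)) (J m).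
Proof.
  intros HT Hgood m Hm. destruct (exists_incr_interval T HT m Hm) as [j Hj].
  exact (proj2 (Hgood j) m Hj).
Qed.

Variable M : nat.
Hypothesis tail_lt_one : forall t L, M <= t ->
  (Rlist_sum (map (fun m => INR (length (J m)) / 2 ^ length (block k m)) (seq t L)) < 1)%R.

Lemma blocks_weight_lt t t' K : M <= t -> k t' <= K ->
  list_sum (map (fun m => length (J m) * 2 ^ (K - length (block k m))) (seq t (t' - t))) < 2 ^ K.
Proof.
  intros Ht HK. apply INR_lt.
  rewrite (INR_list_sum_map _ (fun m => INR (length (J m)) / 2 ^ length (block k m))%R (2 ^ K)%R).
  - rewrite pow_INR. replace (INR 2) with 2%R by (simpl; lra).
    pose proof (pow_lt 2 K ltac:(lra)). pose proof (tail_lt_one t (t' - t) Ht). nra.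
  - intros m Hm. apply in_seq in Hm.
    assert (Hlen : length (block k m) <= K).
    { unfold block. rewrite length_seq. pose proof (incr_le_mono k k_incr (S m) t'). lia. }
    rewrite mult_INR, !pow_INR. replace (INR 2) with 2%R by (simpl; lra).
    replace K with (K - length (block k m) + length (block k m)) at 2 by lia.
    rewrite pow_add. field. apply pow_nonzero. lra.
Qed.

(* The boundary [k u] lies between [A_n] and [B_n], so no block meets both and [copy_back] is
   injective on every block. *)
Lemma exists_good_stage t (prev : cantor) : M <= t ->
  exists t' y, t < t' /\ (forall p, p < k t -> y p = prev p) /\ good_stage t t' y.
Proof.
  intro Ht. pose proof (incr_le_mono k k_incr) as k_mono.
  set (u := S (k t * k t + k t)).
  destruct (exists_square_gap (k u)) as [n Hn].
  assert (Hn_ge : k t <= n).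
  { pose proof (incr_ge_id k k_incr u). destruct (Nat.le_gt_cases (k t) n); [assumption | nia]. }
  set (sg := copy_back (n * n) (n * n + 3 * n + 4) n).
  set (t' := t + (n * n + 4 * n + 4)).
  set (Q m := map sg (block k m)).
  destruct (exists_pattern_avoiding (k t') (seq t (t' - t)) Q J) as [z Hz].
  - intros m _. apply NoDup_map_copy_back; [apply seq_NoDup|].
    destruct (Nat.le_gt_cases u m) as [Hum | Hmu]; [right | left];
      intros p Hp; apply in_seq in Hp.
    + pose proof (k_mono u m Hum). lia.
    + pose proof (k_mono (S m) u Hmu). nia.
  - intros m p Hm Hp. apply in_seq in Hm. apply in_map_iff in Hp as [q [<- Hq]].
    apply in_seq in Hq. assert (sg q <= q) by (apply copy_back_le; lia).
    pose proof (k_mono (S m) t' ltac:(unfold t' in *; lia)). lia.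
  - erewrite map_ext; [apply blocks_weight_lt; lia|].
    intro m. unfold Q. rewrite length_map. reflexivity.
  - set (y p := if p <? k t then prev p else z (sg p)).
    assert (Hy : forall p, k t <= p -> y p = z (sg p)).
    { intros p Hp. unfold y. destruct (Nat.ltb_spec p (k t)); [lia | reflexivity]. }
    exists t', y. split; [lia|]. split; [|split].
    + intros p Hp. unfold y. destruct (Nat.ltb_spec p (k t)); [reflexivity | lia].
    + exists n. pose proof (incr_ge_id k k_incr t). pose proof (incr_ge_id k k_incr t').
      split; [lia | split; [lia|]].
      apply (restr_Icopy_in_Jcopy_of_copy_back _ _ z). intros p Hp. apply Hy. nia.
    + intros m Hm Hin. apply (Hz m); [apply in_seq; lia|].
      unfold restr in Hin. unfold Q. rewrite map_map.
      rewrite (map_ext_in y (fun p => z (sg p))) in Hin; [exact Hin|].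
      intros p Hp. apply in_seq in Hp. apply Hy. pose proof (k_mono t m). lia.
Qed.

End Stages.

Theorem mainTheorem3 : exists X : cantor -> Prop, small X /\ ~ small_star X.
Proof.
  exists (io_in Icopy Jcopy). split.
  - exists Icopy, Jcopy. split; [exact small_seq_copy | auto].
  - intros (k & I & J & Hk & HI & Hss & Hcov).
    assert (I = block k) as -> by (apply functional_extensionality, HI).
    destruct (series_tail_lt_one (fun m => INR (length (J m)) / 2 ^ length (block k m)))
      as [M HM].
    + intro m. apply Rmult_le_pos; [apply pos_INR|].
      apply Rlt_le, Rinv_0_lt_compat, pow_lt. lra.
    + exact (ss_sum _ _ Hss).
    + destruct (fusion k (good_stage k J) M Hk (good_stage_local k J Hk)
                  (exists_good_stage k J Hk M HM)) as (T & x & HT & Hgood).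
      destruct (Hcov x (good_stages_io_in k J T x HT Hgood) (T 0%nat)) as (m & Hm & Hin).
      exact (good_stages_avoid k J T x HT Hgood m Hm Hin).
Qed.
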